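(* Let $\mathcal X$ be a finite field, $A$ a full-rank $l\times n$ matrix over $\mathcal X$ (acting as $x\mapsto Ax$), and assume the index sets are ordered ($\mathcal I_1=\{1,\dots,l\}$, $\mathcal I_0=\{l+1,\dots,n\}$). Let $\Psi$ be the stochastic successive-cancellation (SSC) decoder. Then for every decoder $\phi:\mathcal X^l\times\mathcal Y^n\to\mathcal X^n$, $$\Pr\big(\Psi(A\mathbf X,\mathbf Y)\neq\mathbf X\big)\le 2\,\Pr\big(\phi(A\mathbf X,\mathbf Y)\neq\mathbf X\big),$$ where the left-hand probability is also over the internal randomness of $\Psi$. In particular, if $\Pr(\phi(A\mathbf X,\mathbf Y)\neq\mathbf X)=o(1)$, then $\Pr(\Psi(A\mathbf X,\mathbf Y)\neq\mathbf X)\to0$.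
   Context: $\mathcal Y$ is finite; $(\mathbf X,\mathbf Y)$ is a random pair on $\mathcal X^n\times\mathcal Y^n$. $B:\mathcal X^n\to\mathcal X^{n-l}$ is a map such that $T:\mathcal X^n\to\mathcal X^n$, $T(x)\equiv(Ax,Bx)$ (first the $l$ entries of $Ax$, then the $n-l$ entries of $Bx$), is a bijection. Notation: $c_i^j=(c_i,\dots,c_j)$. Extended codeword: $\mathbf C=(C_1,\dots,C_n)=T(\mathbf X)$. SSC decoder: given $(u,y)\in\mathcal X^l\times\mathcal Y^n$, set $\hat c_1^l=u$ and, for $i=l+1,\dots,n$ successively, draw $\hat c_i$ at random (independently of everything else given $\hat c_1^{i-1}$ and $y$) according to the conditional distribution $\mu_{C_i\mid C_1^{i-1}\mathbf Y}(\cdot\mid \hat c_1^{i-1},y)$ (with an arbitrary fixed distribution used when the conditioning event has probability zero). Then $\Psi(u,y)\equiv T^{-1}(\hat c)$. *)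

From HB Require Import structures.
From mathcomp Require Import all_boot all_order all_algebra all_field.
Set Implicit Arguments. Unset Strict Implicit. Unset Printing Implicit Defensive.
Import Order.TTheory GRing.Theory Num.Theory.
Local Open Scope ring_scope.

Section SSC.
Variables (R : realFieldType) (F : finFieldType) (Y : finType) (l m : nat).
(* n = l + m; vectors in X^n are column vectors 'cV[F]_(l+m) *)
Variable (A : 'M[F]_(l, l + m)) (B : 'cV[F]_(l + m) -> 'cV[F]_m).
(* joint pmf of (X, Y) *)
Variable (P : 'cV[F]_(l + m) -> 'cV[Y]_(l + m) -> R).
(* the arbitrary fixed distribution used when conditioning on a null event *)
Variable (d : F -> R).

Definition Tmap (x : 'cV[F]_(l + m)) : 'cV[F]_(l + m) := col_mx (A *m x) (B x).

(* Pr(C_1^i = c_1^i, Y = y), where C = T(X) *)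
Definition prefix_prob (i : nat) (c : 'cV[F]_(l + m)) (y : 'cV[Y]_(l + m)) : R :=
  \sum_(x : 'cV[F]_(l + m))
     P x y * (([forall j : 'I_(l + m), (j < i)%N ==> (Tmap x j 0 == c j 0)]) : bool)%:R.

(* mu_{C_i | C_1^{i-1} Y}(c_i | c_1^{i-1}, y) (index i is 0-based) *)
Definition cond_prob (i : 'I_(l + m)) (c : 'cV[F]_(l + m)) (y : 'cV[Y]_(l + m)) : R :=
  let den := prefix_prob i c y in
  if den == 0 then d (c i 0) else prefix_prob i.+1 c y / den.

(* probability that the SSC decoder, on input (u, y), produces hat c = c *)
Definition ssc_c_prob (u : 'cV[F]_l) (y : 'cV[Y]_(l + m)) (c : 'cV[F]_(l + m)) : R :=
  (([forall j : 'I_l, c (lshift m j) 0 == u j 0]) : bool)%:R *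
  \prod_(i : 'I_(l + m) | (l <= i)%N) cond_prob i c y.

(* Pr(Psi(u, y) = x') = Pr(T^{-1}(hat c) = x') = Pr(hat c = T x') *)
Definition Psi_prob (u : 'cV[F]_l) (y : 'cV[Y]_(l + m)) (x' : 'cV[F]_(l + m)) : R :=
  ssc_c_prob u y (Tmap x').

(* Pr(Psi(A X, Y) != X), including the internal randomness of Psi *)
Definition ssc_error : R :=
  \sum_(x : 'cV[F]_(l + m)) \sum_(y : 'cV[Y]_(l + m))
     P x y * \sum_(x' : 'cV[F]_(l + m) | x' != x) Psi_prob (A *m x) y x'.

Definition dec_error (phi : 'cV[F]_l -> 'cV[Y]_(l + m) -> 'cV[F]_(l + m)) : R :=
  \sum_(x : 'cV[F]_(l + m)) \sum_(y : 'cV[Y]_(l + m))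
     P x y * (phi (A *m x) y != x)%:R.
End SSC.

Definition is_pmf2 (R : realFieldType) (S T : finType) (P : S -> T -> R) : Prop :=
  (forall s t, 0 <= P s t) /\ \sum_(s : S) \sum_(t : T) P s t = 1.

Definition is_pmf (R : realFieldType) (S : finType) (d : S -> R) : Prop :=
  (forall s, 0 <= d s) /\ \sum_(s : S) d s = 1.

From HB Require Import structures.
From mathcomp Require Import all_boot all_order all_algebra all_field.
Import Order.TTheory GRing.Theory Num.Theory.
Local Open Scope ring_scope.
Set Implicit Arguments. Unset Strict Implicit. Unset Printing Implicit Defensive.

(* Write C = T(X) and, for a fixed observation y,
   S_i(c) = Pr(C_1^i = c_1^i, Y = y).  The SSC decoder draws C_{l+1}, ..., C_n
   from the successive conditionals S_{i+1}/S_i, so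
   (1) its output distribution is a probability distribution (chain rule), and
   (2) whenever Pr(X = x, Y = y) > 0, the probability that it outputs exactly
       T(x) telescopes to Pr(X = x, Y = y) / S_l(T x), where S_l(T x) is the
       mass of the coset {x' | A x' = A x} of x.
   Hence, with p = Pr(X = x, Y = y) and S = S_l(T x), the SSC error on (x, y)
   is p (1 - p/S), which is at most p when phi errs on (x, y) and at most the
   coset mass S - p of the other points when phi is right.  Finally, for any
   deterministic decoder the coset masses counted at its correct points are
   at most its own error mass: a point x' of the coset of a correctly decoded
   x is itself decoded to x, i.e. wrongly, and each x' is counted only once. *)

Lemma prod_geq_succ (R : comPzRingType) n k (hk : (k < n)%N) (f : 'I_n -> R) :
  \prod_(i < n | (k <= i)%N) f i = f (Ordinal hk) * \prod_(i < n | (k.+1 <= i)%N) f i.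
Proof.
rewrite (bigD1 (Ordinal hk)) //=; congr (_ * _); apply: eq_bigl => i.
by rewrite ltn_neqAle andbC eq_sym -(inj_eq val_inj).
Qed.

Lemma prod_geq_end (R : comPzRingType) n (f : 'I_n -> R) :
  \prod_(i < n | (n <= i)%N) f i = 1.
Proof. by rewrite big_pred0 // => i; rewrite leqNgt ltn_ord. Qed.

Lemma telescope_prod_geq (R : fieldType) n k (g : nat -> R) :
  (k <= n)%N -> (forall i, (k <= i <= n)%N -> g i != 0) ->
  \prod_(i < n | (k <= i)%N) (g i.+1 / g i) = g n / g k.
Proof.
move=> hkn hg; rewrite -(big_geq_mkord k n xpredT (fun i => g i.+1 / g i)).
have [hlt|hgt|<-] := ltngtP k n; last by rewrite big_geq // divff // hg ?leqnn.
- apply: telescope_prodf => // i /andP[ki iN].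
  by apply: hg; rewrite (ltnW ki) (ltnW iN).
- by rewrite ltnNge hkn in hgt.
Qed.

Lemma mass_miss_le (R : realFieldType) (p S : R) : 0 < p -> p <= S ->
  p * (1 - p / S) <= S - p.
Proof.
move=> hp hpS; have hS : S != 0 by apply: lt0r_neq0; apply: lt_le_trans hpS.
have -> : p * (1 - p / S) = p / S * (S - p).
  by rewrite !mulrBr !mulr1 (divfK hS) [p * (p / S)]mulrC.
rewrite -[leRHS]mul1r; apply: ler_wpM2r; first by rewrite subr_ge0.
by rewrite ler_pdivrMr ?mul1r // (lt_le_trans hp).
Qed.

(* A decoder [dec] that only sees the key [k x] decodes correctly at most one
   point of each key class; every other point of that class is then decoded
   wrongly. *)
Lemma decoder_class_bound (R : numDomainType) (X : finType) (K : eqType)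
    (k : X -> K) (dec : K -> X) (w : X -> R) : (forall x, 0 <= w x) ->
  \sum_x (dec (k x) == x)%:R * \sum_(x' | (k x' == k x) && (x' != x)) w x' <=
  \sum_x w x * (dec (k x) != x)%:R.
Proof.
move=> w_ge0; under eq_bigr do rewrite big_mkcond mulr_sumr.
rewrite exchange_big /=; apply: ler_sum => x' _.
rewrite (bigD1 (dec (k x'))) //= big1 ?addr0 => [|x hx]; last first.
  have [hdx|] := eqVneq (dec (k x)) x; last by rewrite mul0r.
  rewrite ifF ?mulr0 //; apply/negbTE; apply: contra hx => /andP[/eqP ekx _].
  by rewrite ekx hdx.
have [e|hne] := eqVneq (dec (k x')) x'.
  by rewrite e !eqxx andbF !mulr0.
rewrite /= mulr1; case: (_ == _); case: ifP; rewrite ?mul1r ?mul0r //.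
Qed.

Section Prefixes.
Variables (F : finType) (n : nat).

Definition agree (k : nat) (c c' : 'cV[F]_n) : bool :=
  [forall j : 'I_n, (j < k)%N ==> (c' j 0 == c j 0)].

Definition upd (c : 'cV[F]_n) (i : 'I_n) (v : F) : 'cV[F]_n :=
  \col_j (if j == i then v else c j 0).

Lemma agree_refl k c : agree k c c.
Proof. by apply/forallP => j; rewrite eqxx implybT. Qed.

Lemma agree_mono i j c c' : (i <= j)%N -> agree j c c' -> agree i c c'.
Proof.
move=> hij /forallP H; apply/forallP => k; apply/implyP => hk.
exact: (implyP (H k) (leq_trans hk hij)).
Qed.

Lemma agree_full c c' : agree n c c' -> c' = c.
Proof.
move/forallP=> H; apply/matrixP => i j; rewrite (ord1 j).
exact/eqP/(implyP (H i) (ltn_ord i)).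
Qed.

Lemma upd_lt (c : 'cV[F]_n) (i j : 'I_n) v : (j < i)%N -> upd c i v j 0 = c j 0.
Proof. by move=> hj; rewrite mxE; case: eqP => // e; rewrite e ltnn in hj. Qed.

Lemma agree_upd (R : pzSemiRingType) k (i : 'I_n) c c' : nat_of_ord i = k ->
  (agree k c c')%:R = \sum_(v : F) (agree k.+1 (upd c i v) c')%:R :> R.
Proof.
move=> hi; rewrite (bigD1 (c' i 0)) //= big1 ?addr0.
  congr (nat_of_bool _)%:R; apply/idP/idP => /forallP H; apply/forallP => j.
  - rewrite /upd mxE; case: (eqVneq j i) => [->|nji]; first by rewrite eqxx implybT.
    apply/implyP => hj; apply: (implyP (H j)).
    by rewrite ltn_neqAle -ltnS hj andbT -hi.
  - apply/implyP => hj; have := implyP (H j) (ltnW hj).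
    by rewrite upd_lt ?hi.
move=> v hv; suff /negbTE -> : ~~ agree k.+1 (upd c i v) c' by [].
apply/forallP => H.
have := implyP (H i); rewrite hi ltnSn mxE eqxx => /(_ isT) /eqP e.
by rewrite e eqxx in hv.
Qed.

Lemma causal_kernel_mass (R : comPzRingType) (f : 'I_n -> 'cV[F]_n -> R) :
  (forall (i : 'I_n) (c c' : 'cV[F]_n),
     (forall j : 'I_n, (j <= i)%N -> c j 0 = c' j 0) -> f i c = f i c') ->
  (forall (i : 'I_n) (c : 'cV[F]_n), \sum_(v : F) f i (upd c i v) = 1) ->
  forall k (c : 'cV[F]_n), (k <= n)%N ->
  \sum_(c' : 'cV[F]_n) (agree k c c')%:R * \prod_(i < n | (k <= i)%N) f i c' = 1.
Proof.
move=> f_causal f_mass k c /subnK; rewrite addnC.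
move: (n - k)%N => t; elim: t k c => [|t IH] k c hkt.
- rewrite addn0 in hkt; subst k.
  rewrite (bigD1 c) //= agree_refl prod_geq_end mulr1 big1 ?addr0 // => c' hc'.
  have /negbTE -> : ~~ agree n c c' by apply: contra hc' => /agree_full ->.
  by rewrite mul0r.
have hk : (k < n)%N by rewrite -hkt addnS ltnS leq_addr.
have hk1 : (k.+1 + t = n)%N by rewrite addSnnS.
set i0 := Ordinal hk.
transitivity (\sum_c' \sum_(v : F) (agree k.+1 (upd c i0 v) c')%:R *
    (f i0 (upd c i0 v) * \prod_(i < n | (k.+1 <= i)%N) f i c')).
  apply: eq_bigr => c' _; rewrite (@agree_upd _ k i0) // mulr_suml.
  apply: eq_bigr => v _; rewrite (prod_geq_succ hk).
  case: (boolP (agree _ _ _)) => [hag|_]; last by rewrite !mul0r.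
  congr (_ * (_ * _)); apply: f_causal => j hj.
  by apply/eqP; apply: (implyP (forallP hag j)); exact: hj.
rewrite exchange_big /= -[RHS](f_mass i0 c); apply: eq_bigr => v _.
by under eq_bigr do rewrite mulrCA; rewrite -mulr_sumr IH ?mulr1.
Qed.
End Prefixes.

Section SSCDecoder.
Variables (R : realFieldType) (F : finFieldType) (Y : finType) (l m : nat).
Variables (A : 'M[F]_(l, l + m)) (B : 'cV[F]_(l + m) -> 'cV[F]_m).
Variables (P : 'cV[F]_(l + m) -> 'cV[Y]_(l + m) -> R) (d : F -> R).
Hypothesis T_bij : bijective (Tmap A B).
Hypothesis P_ge0 : forall x y, 0 <= P x y.
Hypothesis d_mass : \sum_(s : F) d s = 1.

Local Notation n := (l + m)%N.
Local Notation T := (Tmap A B).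
Local Notation pref := (prefix_prob A B P).
Local Notation cond := (cond_prob A B P d).
Local Notation ssc := (ssc_c_prob A B P d).

Lemma prefix_probE i c y : pref i c y = \sum_x P x y * (agree i c (T x))%:R.
Proof. by []. Qed.

Lemma prefix_local i (c c' : 'cV[F]_n) y :
  (forall j : 'I_n, (j < i)%N -> c j 0 = c' j 0) -> pref i c y = pref i c' y.
Proof.
move=> h; apply: eq_bigr => x _; congr (_ * (nat_of_bool _)%:R).
apply: eq_forallb => j.
by case: (ltnP j i) => hj //=; rewrite h.
Qed.

Lemma cond_local (i : 'I_n) (c c' : 'cV[F]_n) y :
  (forall j : 'I_n, (j <= i)%N -> c j 0 = c' j 0) -> cond i c y = cond i c' y.
Proof.
move=> h; rewrite /cond_prob (@prefix_local i c c') ?(@prefix_local i.+1 c c') ?h //.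
by move=> j /ltnW /h.
Qed.

Lemma prefix_marginal (i : 'I_n) c y :
  \sum_(v : F) pref i.+1 (upd c i v) y = pref i c y.
Proof.
rewrite /prefix_prob exchange_big /=; apply: eq_bigr => x _.
by rewrite -mulr_sumr (@agree_upd _ _ _ i i c (T x)).
Qed.

Lemma cond_mass (i : 'I_n) c y : \sum_(v : F) cond i (upd c i v) y = 1.
Proof.
have hpref v : pref i (upd c i v) y = pref i c y by apply: prefix_local => j /upd_lt.
rewrite /cond_prob; under eq_bigr do rewrite hpref.
have [_|hS] := eqVneq (pref i c y) 0; first by under eq_bigr do rewrite mxE eqxx.
by rewrite -mulr_suml prefix_marginal mulfV.
Qed.

Lemma prefix_antitone i j c y : (i <= j)%N -> pref j c y <= pref i c y.
Proof.
move=> hij; rewrite !prefix_probE; apply: ler_sum => x _; apply: ler_wpM2l => //.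
by rewrite ler_nat; case: (boolP (agree j _ _)) => // /(agree_mono hij) ->.
Qed.

Lemma prefix_full x y : pref n (T x) y = P x y.
Proof.
rewrite prefix_probE (bigD1 x) //= agree_refl mulr1 big1 ?addr0 // => x' hx'.
have /negbTE -> : ~~ agree n (T x) (T x').
  by apply: contra hx' => /agree_full/(bij_inj T_bij) ->.
by rewrite mulr0.
Qed.

Lemma first_block_agree (u : 'cV[F]_l) (w : 'cV[F]_m) (c : 'cV[F]_n) :
  [forall j : 'I_l, c (lshift m j) 0 == u j 0] = agree l (col_mx u w) c.
Proof.
apply/forallP/forallP => H j.
- apply/implyP => hj; have ej : lshift m (Ordinal hj) = j by apply/val_inj.
  by have := H (Ordinal hj); move: (Ordinal hj) ej => j' <-; rewrite col_mxEu.
- by have := implyP (H (lshift m j)) (ltn_ord j); rewrite col_mxEu.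
Qed.

Lemma agree_Tmap x x' : agree l (T x) (T x') = (A *m x' == A *m x).
Proof.
rewrite -first_block_agree /Tmap; apply/forallP/eqP => [H|eqA j].
- apply/matrixP => i j; rewrite (ord1 j); apply/eqP.
  by have := H i; rewrite col_mxEu.
- by rewrite col_mxEu eqA.
Qed.

Lemma prefix_coset x y : pref l (T x) y = \sum_(x' | A *m x' == A *m x) P x' y.
Proof.
rewrite prefix_probE [RHS]big_mkcond; apply: eq_bigr => x' _.
by rewrite agree_Tmap; case: eqP; rewrite ?mulr1 ?mulr0.
Qed.

Lemma coset_mass x y :
  pref l (T x) y - P x y = \sum_(x' | (A *m x' == A *m x) && (x' != x)) P x' y.
Proof. by rewrite prefix_coset (bigD1 x) //= addrC addrK. Qed.

Lemma ssc_mass u y : \sum_c ssc u y c = 1.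
Proof.
rewrite /ssc_c_prob; under eq_bigr do rewrite (first_block_agree u 0).
exact: (causal_kernel_mass (f := fun i c => cond i c y)
  (fun i c c' h => cond_local y h) (fun i c => cond_mass i c y) _ (leq_addr m l)).
Qed.

(* (2) The SSC decoder recovers the true x with probability
   Pr(X = x, Y = y) / S_l(T x): the conditionals telescope. *)
Lemma ssc_correct x y : 0 < P x y -> ssc (A *m x) y (T x) = P x y / pref l (T x) y.
Proof.
move=> hp; rewrite /ssc_c_prob (first_block_agree _ (B x)) agree_refl mul1r.
have hS i : (l <= i <= n)%N -> pref i (T x) y != 0.
  move=> /andP[_ hi]; apply: lt0r_neq0; apply: lt_le_trans hp _.
  by rewrite -prefix_full; exact: prefix_antitone.
rewrite -prefix_full -(telescope_prod_geq (g := fun i => pref i (T x) y)) ?leq_addr //.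
by apply: eq_bigr => i hi; rewrite /cond_prob (negbTE (hS i _)) // hi ltnW.
Qed.

Lemma ssc_error_at x y :
  \sum_(x' | x' != x) Psi_prob A B P d (A *m x) y x' = 1 - ssc (A *m x) y (T x).
Proof.
rewrite -(ssc_mass (A *m x) y) [in RHS](reindex T) /=; last exact: onW_bij.
by rewrite [in RHS](bigD1 x) //= addrAC subrr add0r.
Qed.

Lemma ssc_error_pointwise (phi : 'cV[F]_l -> 'cV[Y]_n -> 'cV[F]_n) x y :
  P x y * (1 - ssc (A *m x) y (T x)) <=
  P x y * (phi (A *m x) y != x)%:R +
  (phi (A *m x) y == x)%:R * \sum_(x' | (A *m x' == A *m x) && (x' != x)) P x' y.
Proof.
rewrite -coset_mass.
have hpS : P x y <= pref l (T x) y.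
  by rewrite -prefix_full; exact: prefix_antitone (leq_addr m l).
have [p0|hp] := eqVneq (P x y) 0.
  rewrite p0 !mul0r add0r; apply: mulr_ge0 => //.
  by rewrite subr0 -p0.
have {}hp : 0 < P x y by rewrite lt_def hp P_ge0.
rewrite ssc_correct //.
case: eqP => _ /=; rewrite ?mulr0 ?mulr1 ?mul1r ?mul0r ?add0r ?addr0.
- exact: mass_miss_le.
- apply: ler_piMr => //; rewrite gerBl divr_ge0 //.
  exact: le_trans (P_ge0 x y) hpS.
Qed.
End SSCDecoder.

Theorem theorem3 (R : realFieldType) (F : finFieldType) (Y : finType) (l m : nat)
  (A : 'M[F]_(l, l + m)) (B : 'cV[F]_(l + m) -> 'cV[F]_m)
  (P : 'cV[F]_(l + m) -> 'cV[Y]_(l + m) -> R) (d : F -> R)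
  (hA : \rank A = l)
  (hT : bijective (Tmap A B))
  (hP : is_pmf2 P) (hd : is_pmf d)
  (phi : 'cV[F]_l -> 'cV[Y]_(l + m) -> 'cV[F]_(l + m)) :
  ssc_error A B P d <= 2 * dec_error A P phi.
Proof.
have [P_ge0 _] := hP; have [_ d_mass] := hd.
pose coset_rest x y := \sum_(x' | (A *m x' == A *m x) && (x' != x)) P x' y.
have ssc_le : ssc_error A B P d <= \sum_x \sum_y
    (P x y * (phi (A *m x) y != x)%:R + (phi (A *m x) y == x)%:R * coset_rest x y).
  apply: ler_sum => x _; apply: ler_sum => y _.
  rewrite (ssc_error_at P hT d_mass); exact: ssc_error_pointwise.
apply: (le_trans ssc_le); under eq_bigr do rewrite big_split /=.
rewrite big_split /= mulr_natl mulr2n lerD2l exchange_big [leRHS]exchange_big /=.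
apply: ler_sum => y _; rewrite /coset_rest.
exact: (decoder_class_bound (mulmx A) (phi^~ y) (P_ge0^~ y)).
Qed.
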